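(* Let $\mathcal C\subseteq(S^2)^n$ be a vector trifferent code equipped with a fixed total order $<$. For $x,y,a,b\in\mathcal C$ with $x<y$ and $a<b$, \[ P_{x,y}(E_{a,b})=\begin{cases}\{0\}, & (a,b)\ne(x,y),\\ E_{a,b}, & (a,b)=(x,y).\end{cases} \] Consequently the sum $\sum_{x<y} E_{x,y}$ of subspaces of $(\mathbb R^3)^{\otimes n}$, over all pairs $x<y$ in $\mathcal C$, is a direct sum.
   Context: A vector trifferent code of block length $n$ is a subset $\mathcal C\subseteq(S^2)^n$ ($S^2$ the unit sphere in $\mathbb R^3$) such that for any three distinct $x,y,z\in\mathcal C$ there is $i\in[n]$ with $x_i,y_i,z_i$ mutually orthogonal. For nonzero $u,v\in\mathbb R^3$ define the subspace $f(u,v)=u^\perp\cap v^\perp$ if $u\perp v$, and $f(u,v)=u^\perp$ otherwise, where $u^\perp$ is the orthogonal complement of $u$ in $\mathbb R^3$. For $x,y\in\mathcal C$ define $E_{x,y}=\bigotimes_{i=1}^n f(x_i,y_i)\subseteq(\mathbb R^3)^{\otimes n}$ and $P_{x,y}=\bigotimes_{i=1}^n P_{f(x_i,y_i)}$, where $P_S$ denotes the orthogonal projection of $\mathbb R^3$ onto the subspace $S$. *)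

From HB Require Import structures.
From mathcomp Require Import all_boot all_order all_algebra.
From mathcomp Require Import finmap.
From mathcomp Require Import mxtens.
Set Implicit Arguments. Unset Strict Implicit. Unset Printing Implicit Defensive.
Import Order.TTheory GRing.Theory Num.Theory.
Local Open Scope ring_scope.

(* Vectors of R^3 are row vectors 'rV[R]_3; a subspace S of R^m is
   represented (mxalgebra style) by a square matrix whose row space is S.
   Linear maps act on row vectors by right multiplication.
   The tensor power (R^3)^{(x) n} is 'rV[R]_(3^n), with the Kronecker
   product [tensmx] (from mathcomp real_closed/mxtens.v). *)

Section Defs.
Variable R : realFieldType.

Definition dot3 (u v : 'rV[R]_3) : R := (u *m v^T) 0 0.

Definition perp (u : 'rV[R]_3) : 'M[R]_3 := kermx u^T.

Definition fsub (u v : 'rV[R]_3) : 'M[R]_3 :=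
  if dot3 u v == 0 then (perp u :&: perp v)%MS else perp u.

Definition oproj (S : 'M[R]_3) : 'M[R]_3 := proj_mx S (kermx S^T).

Fixpoint tens_seq (s : seq 'M[R]_3) : 'M[R]_(3 ^ size s) :=
  match s return 'M[R]_(3 ^ size s) with
  | [::] => castmx (esym (expn0 3), esym (expn0 3)) (1%:M : 'M[R]_1)
  | M :: s' => castmx (esym (expnS 3 (size s')), esym (expnS 3 (size s')))
                 (tensmx M (tens_seq s'))
  end.

Lemma size_map_enum_ord n (F : 'I_n -> 'M[R]_3) :
  size [seq F i | i <- enum 'I_n] = n.
Proof. by rewrite size_map size_enum_ord. Qed.

Definition tens_fam n (F : 'I_n -> 'M[R]_3) : 'M[R]_(3 ^ n) :=
  castmx (congr1 (expn 3) (size_map_enum_ord F),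
          congr1 (expn 3) (size_map_enum_ord F))
    (tens_seq [seq F i | i <- enum 'I_n]).

(* words of block length n: row i of x : 'M_(n,3) is the coordinate x_i *)
Definition coord n (x : 'M[R]_(n, 3)) (i : 'I_n) : 'rV[R]_3 := row i x.

Definition on_sphere n (x : 'M[R]_(n, 3)) : Prop :=
  forall i, dot3 (coord x i) (coord x i) = 1.

Definition mutually_orth (u v w : 'rV[R]_3) : Prop :=
  [/\ dot3 u v = 0, dot3 u w = 0 & dot3 v w = 0].

Definition vector_trifferent n (C : {fset 'M[R]_(n, 3)}) : Prop :=
  (forall x, x \in C -> on_sphere x) /\
  (forall x y z, x \in C -> y \in C -> z \in C ->
     x != y -> x != z -> y != z ->
     exists i, mutually_orth (coord x i) (coord y i) (coord z i)).

Definition Exy n (x y : 'M[R]_(n, 3)) : 'M[R]_(3 ^ n) :=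
  tens_fam (fun i => fsub (coord x i) (coord y i)).

Definition Pxy n (x y : 'M[R]_(n, 3)) : 'M[R]_(3 ^ n) :=
  tens_fam (fun i => oproj (fsub (coord x i) (coord y i))).

Definition strict_total_on (T : eqType) (A : pred T) (lt : rel T) : Prop :=
  [/\ (forall x, x \in A -> ~~ lt x x),
      (forall x y z, x \in A -> y \in A -> z \in A -> lt x y -> lt y z -> lt x z)
    & (forall x y, x \in A -> y \in A -> x != y -> lt x y || lt y x)].

End Defs.

From Pilot Require Import Defs.
From HB Require Import structures.
From mathcomp Require Import all_boot all_order all_algebra.
From mathcomp Require Import finmap.
From mathcomp Require Import mxtens.
Set Implicit Arguments. Unset Strict Implicit. Unset Printing Implicit Defensive.
Import Order.TTheory GRing.Theory Num.Theory.
Local Open Scope ring_scope.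

(* On each coordinate i, P_{x,y} is the orthogonal projection onto f(x_i, y_i),
   so E_{a,b} P_{x,y} is the tensor product of the f(a_i, b_i) P_{f(x_i, y_i)}:
   it is E_{x,y} when (a, b) = (x, y) and it vanishes as soon as one factor
   does.  If (a, b) is neither (x, y) nor (y, x), pick z in {a, b} outside
   {x, y}; trifferency gives a coordinate i at which x_i, y_i, z_i are
   orthonormal.  There f(x_i, y_i) = x_i^perp :&: y_i^perp is the line through
   z_i, whereas f(a_i, b_i) lies in z_i^perp (either z = a, or z = b and a_i is
   x_i or y_i, hence orthogonal to b_i), so that factor is zero.  Directness of
   the sum follows: a vector of E_p :&: (sum of the other E_q) is both fixed
   and killed by P_p. *)

(* finmap's [fsub] and vector's [coord] shadow the definitions of Defs. *)
Local Notation fsub := Defs.fsub.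
Local Notation coord := Defs.coord.

Section CastMx.
Variable R : pzRingType.

Lemma castmx_mulmx k N (e : k = N) (A B : 'M[R]_k) :
  castmx (e, e) A *m castmx (e, e) B = castmx (e, e) (A *m B).
Proof. by case: N / e; rewrite !castmx_id. Qed.

Lemma castmx0 m n m' n' (e : (m = m') * (n = n')) : castmx e (0 : 'M[R]_(m, n)) = 0.
Proof. by case: e => em en; case: m' / em; case: n' / en; rewrite castmx_id. Qed.

Lemma castmx1 k N (e : k = N) : castmx (e, e) (1%:M : 'M[R]_k) = 1%:M.
Proof. by case: N / e; rewrite castmx_id. Qed.

Lemma tensmx_castmxr m n p (e : n = p) (A : 'M[R]_m) (B : 'M[R]_n) :
  A *t castmx (e, e) B = castmx (congr1 (muln m) e, congr1 (muln m) e) (A *t B).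
Proof. by case: p / e; rewrite !castmx_id. Qed.

End CastMx.

Section TensorFamily.
Variables (R : realFieldType) (I : eqType).
Implicit Types (F G : I -> 'M[R]_3) (s : seq I).

Definition tens_map F s : 'M[R]_(3 ^ size s) :=
  castmx (congr1 (expn 3) (size_map F s), congr1 (expn 3) (size_map F s))
    (tens_seq [seq F i | i <- s]).

Lemma tens_map_nil F : tens_map F [::] = 1%:M.
Proof. by rewrite /tens_map /= castmx_comp castmx1. Qed.

Lemma tens_map_cons F i s :
  tens_map F (i :: s) =
  castmx (esym (expnS 3 (size s)), esym (expnS 3 (size s))) (F i *t tens_map F s).
Proof. by rewrite /tens_map /= tensmx_castmxr !castmx_comp; apply: eq_castmx. Qed.

Lemma tens_map_mul F G s :
  tens_map F s *m tens_map G s = tens_map (fun i => F i *m G i) s.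
Proof.
elim: s => [|i s IHs]; first by rewrite !tens_map_nil mulmx1.
by rewrite !tens_map_cons castmx_mulmx tensmx_mul IHs.
Qed.

Lemma eq_tens_map F G s : F =1 G -> tens_map F s = tens_map G s.
Proof.
move=> eqFG; elim: s => [|i s IHs]; first by rewrite !tens_map_nil.
by rewrite !tens_map_cons eqFG IHs.
Qed.

Lemma tens_map_eq0 F s i : i \in s -> F i = 0 -> tens_map F s = 0.
Proof.
move=> + Fi0; elim: s => [|j s IHs] //; rewrite inE tens_map_cons.
by case/predU1P => [<- | /IHs ->]; rewrite ?Fi0 ?tens0mx ?tensmx0 castmx0.
Qed.

End TensorFamily.

Section TensorProductOverCoordinates.
Variables (R : realFieldType) (n : nat).
Implicit Types F G : 'I_n -> 'M[R]_3.

Let e_enum := congr1 (expn 3) (size_enum_ord n).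

Lemma tens_famE F : tens_fam F = castmx (e_enum, e_enum) (tens_map F (enum 'I_n)).
Proof. by rewrite /tens_fam /tens_map castmx_comp; apply: eq_castmx. Qed.

Lemma tens_fam_mul F G : tens_fam F *m tens_fam G = tens_fam (fun i => F i *m G i).
Proof. by rewrite !tens_famE castmx_mulmx tens_map_mul. Qed.

Lemma eq_tens_fam F G : F =1 G -> tens_fam F = tens_fam G.
Proof. by move=> eqFG; rewrite !tens_famE (eq_tens_map _ eqFG). Qed.

Lemma tens_fam_eq0 F i : F i = 0 -> tens_fam F = 0.
Proof. by move=> Fi0; rewrite tens_famE (tens_map_eq0 (mem_enum _ i)) ?castmx0. Qed.

End TensorProductOverCoordinates.

Lemma kermx_trmxS (F : fieldType) m1 m2 n (S : 'M[F]_(m1, n)) (T : 'M[F]_(m2, n)) :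
  (S <= T)%MS -> (kermx T^T <= kermx S^T)%MS.
Proof.
by case/submxP=> D ->; apply/sub_kermxP; rewrite trmx_mul mulmxA mulmx_ker mul0mx.
Qed.

Section Orthogonality.
Variable R : realFieldType.

Lemma rv_mul_trmx_eq0 m (v : 'rV[R]_m) : v *m v^T = 0 -> v = 0.
Proof.
move/matrixP/(_ 0 0); rewrite !mxE => vv0; apply/rowP => k; rewrite mxE.
have sq_ge0 i : true -> 0 <= v 0 i * v^T i 0 by rewrite mxE -expr2 sqr_ge0.
move: (psumr_eq0P sq_ge0 vv0 (i := k) isT) => /eqP.
by rewrite mxE mulf_eq0 orbb => /eqP.
Qed.

Lemma capmx_kermx_tr m n (S : 'M[R]_(m, n)) : (S :&: kermx S^T)%MS = 0.
Proof.
apply/eqP; rewrite -submx0; apply/rV_subP => v.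
rewrite sub_capmx => /andP[/submxP[a ->] /sub_kermxP aSS0].
by rewrite (rv_mul_trmx_eq0 (v := a *m S)) ?sub0mx // trmx_mul mulmxA aSS0 mul0mx.
Qed.

Implicit Types (S T : 'M[R]_3) (u v w z : 'rV[R]_3).

Lemma oproj_id S : S *m oproj S = S.
Proof. by rewrite /oproj proj_mx_id ?capmx_kermx_tr. Qed.

Lemma oproj_eq0 S T : (T <= kermx S^T)%MS -> T *m oproj S = 0.
Proof. by move=> sTS; rewrite /oproj proj_mx_0 ?capmx_kermx_tr. Qed.

Lemma dot3_mx11 u v : u *m v^T = (dot3 u v)%:M.
Proof. exact: mx11_scalar. Qed.

Lemma dot3C u v : dot3 u v = dot3 v u.
Proof. by rewrite /dot3 -[u *m v^T]trmxK trmx_mul trmxK mxE. Qed.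

Lemma sub_perp w u : (w <= perp u)%MS = (dot3 w u == 0).
Proof.
by rewrite /perp sub_kermx dot3_mx11 -scalemx1 scalemx_eq0 oner_eq0 orbF.
Qed.

Definition orthonormal3 u v w :=
  [/\ dot3 u u = 1, dot3 v v = 1, dot3 w w = 1 & mutually_orth u v w].

Lemma orthonormal3_expansion u v w z : orthonormal3 u v w ->
  z = dot3 z u *: u + dot3 z v *: v + dot3 z w *: w.
Proof.
case=> uu vv ww [uv uw vw].
(* The rows u, v, w make an orthogonal matrix M, so that M^T M = 1 too. *)
pose M : 'M[R]_(1 + (1 + 1), 3) := col_mx u (col_mx v w).
have MMt : M *m M^T = 1%:M.
  rewrite /M tr_col_mx tr_col_mx !(mul_col_row, mul_mx_row, mul_col_mx) !dot3_mx11.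
  rewrite uu vv ww uv uw vw (dot3C v u) (dot3C w u) (dot3C w v) uv uw vw.
  by rewrite raddf0 row_mx0 col_mx0 -!scalar_mx_block.
rewrite -[z in LHS]mulmx1 -(mulmx1C MMt) mulmxA /M tr_col_mx tr_col_mx.
by rewrite !(mul_mx_row, mul_row_col) !dot3_mx11 !mul_scalar_mx addrA.
Qed.

End Orthogonality.

Section CoordinateSubspaces.
Variable R : realFieldType.
Implicit Types (S : 'M[R]_3) (u v w : 'rV[R]_3).

Lemma fsub_perpl u v : (fsub u v <= perp u)%MS.
Proof. by rewrite /fsub; case: ifP => _; rewrite ?capmxSl. Qed.

Lemma fsub_perpr u v : dot3 u v = 0 -> (fsub u v <= perp v)%MS.
Proof. by rewrite /fsub => ->; rewrite eqxx capmxSr. Qed.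

Lemma capmx_perp_orthonormal u v w : orthonormal3 u v w -> (perp u :&: perp v <= w)%MS.
Proof.
move=> uvw; apply/rV_subP => z; rewrite sub_capmx !sub_perp => /andP[/eqP zu /eqP zv].
by rewrite (orthonormal3_expansion z uvw) zu zv !scale0r !add0r scalemx_sub.
Qed.

Lemma fsub_orthonormal u v w : orthonormal3 u v w -> (fsub u v <= w)%MS.
Proof.
move=> uvw; case: (uvw) => _ _ _ [uv _ _].
by rewrite /fsub uv eqxx capmx_perp_orthonormal.
Qed.

Lemma orth_fsub_orthonormal u v w S :
  orthonormal3 u v w -> (S <= perp w)%MS -> (S <= kermx (fsub u v)^T)%MS.
Proof.
move=> /fsub_orthonormal/kermx_trmxS perp_w_sub sSw.
exact: submx_trans sSw perp_w_sub.
Qed.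

End CoordinateSubspaces.

Local Open Scope fset_scope.

Section TrifferentCode.
Variables (R : realFieldType) (n : nat) (C : {fset 'M[R]_(n, 3)}).
Hypothesis trifC : vector_trifferent C.
Implicit Types x y z a b : 'M[R]_(n, 3).

Lemma trifferent_orthonormal x y z : x \in C -> y \in C -> z \in C ->
  x != y -> x != z -> y != z ->
  exists i, orthonormal3 (coord x i) (coord y i) (coord z i).
Proof.
case: trifC => sphC tri xC yC zC xy xz yz.
have [i orth_i] := tri x y z xC yC zC xy xz yz.
by exists i; split; rewrite ?sphC.
Qed.

Lemma trifferent_fsub_orth x y a b : x \in C -> y \in C -> a \in C -> b \in C ->
  x != y -> a != b -> (a, b) != (x, y) -> (a, b) != (y, x) ->
  exists i, (fsub (coord a i) (coord b i) <= kermx (fsub (coord x i) (coord y i))^T)%MS.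
Proof.
move=> xC yC aC bC xy ab abxy abyx.
have [/orP[]/eqP aE | /norP[ax ay]] := boolP ((a == x) || (a == y)); first 2 last.
- rewrite ![a == _]eq_sym in ax ay.
  have [i xya] := trifferent_orthonormal xC yC aC xy ax ay.
  by exists i; apply: orth_fsub_orthonormal xya (fsub_perpl _ _).
- subst a; have yb : y != b by apply: contraNneq abxy => <-.
  have [i xyb] := trifferent_orthonormal xC yC bC xy ab yb.
  exists i; apply: (orth_fsub_orthonormal xyb) (fsub_perpr _).
  by case: xyb => _ _ _ [].
- subst a; have xb : x != b by apply: contraNneq abyx => <-.
  have [i xyb] := trifferent_orthonormal xC yC bC xy xb ab.
  exists i; apply: (orth_fsub_orthonormal xyb) (fsub_perpr _).
  by case: xyb => _ _ _ [].
Qed.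

Lemma Exy_mul_Pxy x y : Exy x y *m Pxy x y = Exy x y.
Proof. by rewrite /Exy /Pxy tens_fam_mul; apply: eq_tens_fam => i; apply: oproj_id. Qed.

Lemma Exy_mul_Pxy_eq0 x y a b : x \in C -> y \in C -> a \in C -> b \in C ->
  x != y -> a != b -> (a, b) != (x, y) -> (a, b) != (y, x) ->
  Exy a b *m Pxy x y = 0.
Proof.
move=> xC yC aC bC xy ab abxy abyx.
have [i orth_i] := trifferent_fsub_orth xC yC aC bC xy ab abxy abyx.
by rewrite /Exy /Pxy tens_fam_mul (tens_fam_eq0 (i := i)) // oproj_eq0.
Qed.

End TrifferentCode.

Section DirectSumByProjections.
Variables (F : fieldType) (I : finType) (P : pred I) (m : nat) (E Q : I -> 'M[F]_m).
Hypothesis EQ_id : forall i, P i -> E i *m Q i = E i.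
Hypothesis EQ_eq0 : forall i j, P i -> P j -> j != i -> E j *m Q i = 0.

Lemma mxdirect_sums_proj : mxdirect (\sum_(i | P i) E i).
Proof.
apply/mxdirect_sumsP => i Pi; set M := (_ :&: _)%MS.
have /submxP[D ME] : (M <= E i)%MS by apply: capmxSl.
have : M *m Q i = 0.
  apply/sub_kermxP; apply: submx_trans (capmxSr _ _) _.
  by apply/sumsmx_subP => j /andP[Pj ji]; apply/sub_kermxP; apply: EQ_eq0.
by rewrite ME -mulmxA EQ_id.
Qed.

End DirectSumByProjections.

Theorem mainTheorem6 (R : realFieldType) (n : nat)
  (C : {fset 'M[R]_(n, 3)}) (lt : rel 'M[R]_(n, 3)) :
  vector_trifferent C ->
  strict_total_on (mem C) lt ->
  (forall x y a b, x \in C -> y \in C -> a \in C -> b \in C ->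
     lt x y -> lt a b ->
     (Exy a b *m Pxy x y ==
        (if (a, b) == (x, y) then Exy a b else 0 : 'M[R]_(3 ^ n)))%MS) /\
  mxdirect (\sum_(p : C * C | lt (val p.1) (val p.2))
              Exy (val p.1) (val p.2))%MS.
Proof.
move=> trifC [lt_irr lt_trans _].
have lt_neq x y : x \in C -> lt x y -> x != y.
  by move=> xC ltxy; apply/eqP => xy; move: (lt_irr x xC); rewrite {2}xy ltxy.
have EP_eq0 x y a b : x \in C -> y \in C -> a \in C -> b \in C ->
    lt x y -> lt a b -> (a, b) != (x, y) -> Exy a b *m Pxy x y = 0.
  move=> xC yC aC bC ltxy ltab abxy.
  apply: (Exy_mul_Pxy_eq0 trifC xC yC aC bC (lt_neq _ _ xC ltxy)
           (lt_neq _ _ aC ltab) abxy).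
  by apply/eqP => -[ay bx]; subst; move: (lt_irr x xC); rewrite (lt_trans x y x).
split=> [x y a b xC yC aC bC ltxy ltab | ].
  case: eqP => [[-> ->] | /eqP abxy]; first by rewrite Exy_mul_Pxy !submx_refl.
  by rewrite (EP_eq0 x y) ?submx_refl.
apply: mxdirect_sums_proj => [p _ | p q ltp ltq qp]; first exact: Exy_mul_Pxy.
(* [q != p] in [C * C] unfolds to a comparison of the underlying matrices. *)
by apply: EP_eq0 ltp ltq qp; apply: fsvalP.
Qed.
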